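(* Let $G=(V,E)$ be a regular simple graph on $n$ vertices and let $2\le k\le n-2$ be such that $F_k(G)$ is regular. Then there exists a constant $c$, depending on $k$, the degree of $G$ and the degree of $F_k(G)$, such that $d_A(b)=c$ for every vertex $A$ of $F_k(G)$ (i.e. every $k$-subset $A\subseteq V$) and every $b\in V\setminus A$.
   Context: For a simple graph $G=(V,E)$ on $n$ vertices and an integer $1\le k<n$, the $k$-token graph $F_k(G)$ is the graph whose vertices are all $k$-element subsets of $V$, two such subsets $A,B$ being adjacent whenever their symmetric difference $A\triangle B$ is a pair $\{a,b\}$ with $a$ adjacent to $b$ in $G$. For $X\subseteq V$ and $v\in V$, $d_X(v)$ denotes the number of neighbors of $v$ in $G$ that lie in $X$. *)

From mathcomp Require Import all_boot.
Set Implicit Arguments. Unset Strict Implicit. Unset Printing Implicit Defensive.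

Section Token.
Variable T : finType.

Definition simple_graph (e : rel T) : Prop := symmetric e /\ irreflexive e.

Definition gdeg (e : rel T) (v : T) : nat := #|[set w | e v w]|.

Definition regular (e : rel T) : Prop := exists r, forall v, gdeg e v = r.

Definition dX (e : rel T) (X : {set T}) (v : T) : nat := #|[set w in X | e v w]|.

Definition tok_adj (e : rel T) (A B : {set T}) : bool :=
  [exists a, exists b, e a b && ((A :\: B) :|: (B :\: A) == [set a; b])].

Definition tok_deg (e : rel T) (k : nat) (A : {set T}) : nat :=
  #|[set B : {set T} | (#|B| == k) && tok_adj e A B]|.

Definition tok_regular (e : rel T) (k : nat) : Prop :=
  exists d, forall A : {set T}, #|A| = k -> tok_deg e k A = d.
End Token.

From mathcomp Require Import all_boot zify.
Set Implicit Arguments. Unset Strict Implicit. Unset Printing Implicit Defensive.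

(* The degree of A in F_k(G) equals the number of edges leaving A: the
   neighbours of A are the sets obtained by sliding one token of A along such
   an edge.  For a (k-1)-set S and x, y outside S, comparing the k-sets
   x + S and y + S then shows, by regularity of G and F_k(G), that
   d_S(x) = d_S(y).  Applied to z + S0 and w + S0 for a (k-2)-set S0 avoiding
   distinct x, y, z, w, this gives e(x,z) + e(y,w) = e(y,z) + e(x,w).  If some
   x sees z while y does not, this spreads to all other vertices, so
   deg y <= 1 < n - 2 <= deg x, impossible in a regular graph.  Hence G is
   complete or empty, and c = k or c = 0. *)

Lemma exists_subset_card (T : finType) (U : {set T}) m :
  m <= #|U| -> exists2 S : {set T}, S \subset U & #|S| = m.
Proof.
rewrite -bin_gt0 -cards_draws => /card_gt0P [S].
by rewrite inE => /andP [sSU /eqP cS]; exists S.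
Qed.

Section CutEdges.
Variables (T : finType) (e : rel T).

Definition cut_edges (A : {set T}) : {set T * T} :=
  [set p | [&& p.1 \in A, p.2 \notin A & e p.1 p.2]].

Lemma dX_sum (X : {set T}) v : dX e X v = \sum_(w in X) (e v w : nat).
Proof.
rewrite /dX -sum1_card big_mkcond [RHS]big_mkcond /=.
by apply: eq_bigr => w _; rewrite inE; case: (w \in X); case: (e v w).
Qed.

Lemma gdeg_sum v : gdeg e v = \sum_w (e v w : nat).
Proof.
rewrite /gdeg -sum1_card big_mkcond /=.
by apply: eq_bigr => w _; rewrite inE; case: (e v w).
Qed.

Lemma dX_setU1 (S : {set T}) z x : z \notin S -> dX e (z |: S) x = e x z + dX e S x.
Proof. by move=> zS; rewrite !dX_sum big_setU1. Qed.

Lemma card_cut_edges (A : {set T}) :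
  #|cut_edges A| = \sum_(a in A) \sum_(b in ~: A) (e a b : nat).
Proof.
rewrite pair_big /= -sum1_card big_mkcond [RHS]big_mkcond /=.
apply: eq_bigr => p _; rewrite !inE.
by case: (p.1 \in A); case: (p.2 \in A); case: (e p.1 p.2).
Qed.

Hypotheses (e_sym : symmetric e) (e_irr : irreflexive e).

Lemma card_cut_edges_setU1 (S : {set T}) x : x \notin S ->
  #|cut_edges (x |: S)| + 2 * dX e S x = gdeg e x + #|cut_edges S|.
Proof.
move=> xS.
have CxS : ~: (x |: S) = (~: S) :\ x.
  by apply/setP => z; rewrite !inE negb_or andbC.
have xCS : x \in ~: S by rewrite inE.
have deg_split : \sum_w (e x w : nat) =
    \sum_(w in S) (e x w : nat) + \sum_(w in ~: S :\ x) (e x w : nat).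
  rewrite (bigID (mem (x |: S))) /= big_setU1 //= e_irr add0n.
  by apply/congr1/eq_bigl => z; rewrite -CxS in_setC.
have out_split : \sum_(a in S) \sum_(b in ~: S) (e a b : nat) =
    \sum_(a in S) (e x a + \sum_(b in ~: S :\ x) (e a b : nat)).
  by apply: eq_bigr => a _; rewrite (big_setD1 x xCS) /= e_sym.
rewrite !card_cut_edges big_setU1 //= gdeg_sum dX_sum CxS deg_split out_split.
rewrite big_split /=; lia.
Qed.

Lemma card_swap (A : {set T}) a b : a \in A -> b \notin A -> #|b |: (A :\ a)| = #|A|.
Proof.
by move=> aA bA; rewrite cardsU1 !inE (negbTE bA) andbF (cardsD1 a A) aA.
Qed.

Lemma symdiff_swap (A : {set T}) a b : a \in A -> b \notin A ->
  let B := b |: (A :\ a) in (A :\: B) :|: (B :\: A) = [set a; b].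
Proof.
move=> aA bA /=; apply/setP => z; rewrite !inE.
case: (eqVneq z b) => [->|zb]; first by rewrite (negbTE bA) orbT.
case: (eqVneq z a) => [->|za]; first by rewrite aA.
by case: (z \in A).
Qed.

Lemma symdiff_pair_swap (A B : {set T}) a b : #|A| = #|B| ->
  (A :\: B) :|: (B :\: A) = [set a; b] -> a \in A ->
  b \notin A /\ B = b |: (A :\ a).
Proof.
move=> cAB AB aA.
have mem z : (z \in A :\: B) || (z \in B :\: A) = (z == a) || (z == b).
  by rewrite -in_setU AB !inE.
have aB : a \notin B.
  by have := mem a; rewrite eqxx !inE aA /=; case: (a \in B).
have /card_gt0P [c cBA] : 0 < #|B :\: A|.
  rewrite cardsD setIC -cAB -cardsD.
  by apply/card_gt0P; exists a; rewrite !inE aA aB.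
have cb : c = b.
  have /orP [/eqP ca | /eqP //] : (c == a) || (c == b) by rewrite -mem cBA orbT.
  by move: cBA; rewrite ca inE aA.
move: cBA; rewrite cb !inE => /andP [bA bB]; split=> //.
apply/setP => z; rewrite !inE.
case: (eqVneq z b) => [->|zb]; first by rewrite bB.
case: (eqVneq z a) => [->|za]; first by rewrite (negbTE aB).
by move: (mem z); rewrite !inE (negbTE za) (negbTE zb); case: (z \in A); case: (z \in B).
Qed.

Lemma tok_nbhs_swap (A : {set T}) :
  [set B : {set T} | (#|B| == #|A|) && tok_adj e A B] =
  [set p.2 |: (A :\ p.1) | p in cut_edges A].
Proof.
apply/setP => B; rewrite inE; apply/andP/imsetP.
  case=> /eqP cBA /existsP [a /existsP [b /andP [eab /eqP AB]]].
  have [aA | aA] := boolP (a \in A).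
    have [bA ->] := symdiff_pair_swap (esym cBA) AB aA.
    by exists (a, b); rewrite // inE aA bA eab.
  have aB : a \in B.
    have : a \in (A :\: B) :|: (B :\: A) by rewrite AB !inE eqxx.
    by rewrite !inE (negbTE aA) andbF.
  have BA : (B :\: A) :|: (A :\: B) = [set a; b] by rewrite setUC.
  have [_ defA] := symdiff_pair_swap cBA BA aB.
  have bA : b \in A by rewrite defA setU11.
  have [aA' ->] := symdiff_pair_swap (esym cBA) (etrans AB (setUC _ _)) bA.
  by exists (b, a); rewrite // inE bA aA' e_sym eab.
case=> [[a b]]; rewrite inE /= => /and3P [aA bA eab] ->; split.
  by rewrite card_swap.
by apply/existsP; exists a; apply/existsP; exists b; rewrite eab /= symdiff_swap.
Qed.

Lemma swap_inj (A : {set T}) :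
  {in cut_edges A &, injective (fun p : T * T => p.2 |: (A :\ p.1))}.
Proof.
move=> [a b] [a' b']; rewrite !inE /= => /and3P [aA bA _] /and3P [aA' bA' _].
move/setP=> eqB; have := eqB a; have := eqB b.
rewrite !inE !eqxx (negbTE bA) !andbF !orbF => /esym/eqP <-.
have ab : (a == b) = false by apply: contraNF bA => /eqP <-.
by rewrite ab aA andbT => /esym/negbFE/eqP <-.
Qed.

Lemma tok_deg_cut_edges (A : {set T}) : tok_deg e #|A| A = #|cut_edges A|.
Proof. by rewrite /tok_deg tok_nbhs_swap card_in_imset //; apply: swap_inj. Qed.

End CutEdges.

Section RegularTokenGraph.
Variables (T : finType) (e : rel T) (k r d : nat).
Hypotheses (e_sym : symmetric e) (e_irr : irreflexive e).
Hypothesis e_reg : forall v, gdeg e v = r.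
Hypothesis tok_reg : forall A : {set T}, #|A| = k -> tok_deg e k A = d.
Hypotheses (k_ge2 : 2 <= k) (card_ge : k + 2 <= #|T|).

Lemma dX_eq_outside (S : {set T}) x y : #|S|.+1 = k -> x \notin S -> y \notin S ->
  dX e S x = dX e S y.
Proof.
move=> cS xS yS.
have tok_regU v : v \notin S -> #|cut_edges e (v |: S)| = d.
  by move=> vS; rewrite -tok_deg_cut_edges // cardsU1 vS add1n cS tok_reg // cardsU1 vS.
have := card_cut_edges_setU1 e_sym e_irr xS.
have := card_cut_edges_setU1 e_sym e_irr yS.
rewrite !tok_regU // !e_reg; lia.
Qed.

Lemma adj_exchange x y z w : uniq [:: x; y; z; w] ->
  e x z + e y w = e y z + e x w.
Proof.
rewrite /= !inE !negb_or andbT => /and3P [/and3P [xy xz xw] /andP [yz yw] zw].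
set X := x |: (y |: (z |: [set w])).
have cX : #|X| = 4.
  by rewrite !cardsU1 cards1 !inE (negbTE xy) (negbTE xz) (negbTE xw) (negbTE yz) (negbTE yw) (negbTE zw).
have [S0 sS0 card_S0] : exists2 S0 : {set T}, S0 \subset ~: X & #|S0| = k - 2.
  by apply: exists_subset_card; move: (cardsC X); rewrite cX; lia.
have notS0 v : v \in X -> v \notin S0.
  by move=> vX; apply: contraL vX => /(subsetP sS0); rewrite inE.
have [xS0 yS0 zS0 wS0] : [/\ x \notin S0, y \notin S0, z \notin S0 & w \notin S0].
  by split; apply: notS0; rewrite !inE eqxx ?orbT.
have cU v : v \notin S0 -> #|v |: S0|.+1 = k.
  by move=> vS0; rewrite cardsU1 vS0 card_S0 add1n -addn2 addnC subnKC.
have hz : dX e (z |: S0) x = dX e (z |: S0) y.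
  by apply: dX_eq_outside; rewrite ?cU // !inE negb_or ?xz ?yz.
have hw : dX e (w |: S0) x = dX e (w |: S0) y.
  by apply: dX_eq_outside; rewrite ?cU // !inE negb_or ?xw ?yw.
move: hz hw; rewrite !dX_setU1 //; clear; lia.
Qed.

Lemma adj_transfer x y z : x != y -> x != z -> y != z -> e x z -> e y z.
Proof.
move=> xy xz yz exz; apply: contraT => eyz.
have only_x w : w != x -> w != y -> e x w && ~~ e y w.
  move=> wx wy; have [<- | zw] := eqVneq z w; first by rewrite exz eyz.
  have := @adj_exchange x y z w.
  rewrite /= !inE !negb_or xy xz yz zw (eq_sym x w) (eq_sym y w) wx wy exz (negbTE eyz).
  by move=> /(_ isT); case: (e x w); case: (e y w).
have deg_y : gdeg e y <= 1.
  rewrite /gdeg -(cards1 x); apply/subset_leq_card/subsetP => v; rewrite !inE => eyv.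
  have vy : v != y by apply: contraTneq eyv => ->; rewrite e_irr.
  apply: contraLR eyv => vx.
  by have /andP [] := only_x v vx vy.
have deg_x : #|T| - 2 <= gdeg e x.
  have : #|~: [set x; y]| = #|T| - 2 by rewrite -(cardsC [set x; y]) cards2 xy addKn.
  move=> <-; apply/subset_leq_card/subsetP => v; rewrite !inE negb_or => /andP [vx vy].
  by have /andP [] := only_x v vx vy.
move: deg_x deg_y; rewrite !e_reg; clear -k_ge2 card_ge; lia.
Qed.

Lemma adj_indep_source x y z : x != z -> y != z -> e x z = e y z.
Proof.
move=> xz yz; have [-> // | xy] := eqVneq x y.
by apply/idP/idP; apply: adj_transfer; rewrite // eq_sym.
Qed.

Lemma adj_const u v u' v' : u != v -> u' != v' -> e u v = e u' v'.
Proof.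
move=> uv; have [-> | u'v] := eqVneq u' v => uv'.
  by rewrite (e_sym v); apply: adj_indep_source; rewrite // eq_sym.
rewrite (adj_indep_source uv u'v) e_sym (e_sym u').
by apply: adj_indep_source; rewrite eq_sym.
Qed.
End RegularTokenGraph.

Theorem lemma1 (T : finType) (e : rel T) (k : nat) :
  simple_graph e -> regular e ->
  2 <= k -> k <= #|T| - 2 ->
  tok_regular e k ->
  exists c : nat, forall (A : {set T}) (b : T),
    #|A| = k -> b \notin A -> dX e A b = c.
Proof.
move=> [e_sym e_irr] [r e_reg] k_ge2 k_le [d tok_reg].
have card_ge : k + 2 <= #|T| by lia.
have [/existsP [u /existsP [v euv]] | no_edge] := boolP [exists u, exists v, e u v].
  have uv : u != v by apply: contraTneq euv => ->; rewrite e_irr.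
  exists k => A b <- bA; apply: eq_card => w; rewrite inE andb_idr // => wA.
  have bw : b != w by apply: contraNneq bA => ->.
  by rewrite (adj_const e_sym e_irr e_reg tok_reg k_ge2 card_ge bw uv).
exists 0 => A b _ _; apply: eq_card0 => w; rewrite inE; apply/andP => -[_ ebw].
by move/negP: no_edge; apply; apply/existsP; exists b; apply/existsP; exists w.
Qed.
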